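(* Let $t\ge1$ be an integer. The affine transformation $(x,y)\mapsto(x+H_t,\ y+x+H_t/2)$ maps the lattice $\Lambda_t=(\tfrac t2+\mathbb Z)\times\mathbb Z$ onto itself, maps the grid parabola $P_t$ onto itself, and maps the reference parabola $\Pi_t\colon y=x^2/(2H_t)$, as well as every vertical translate of $\Pi_t$, onto itself.
   Context: Fix an integer $t\ge1$. Let $S_t$ be the set of rational numbers $s$ which, written in lowest terms as $s=a/b$ with $a\in\mathbb Z$ and $b$ a positive integer, satisfy $b\le t$. For $s=a/b\in S_t$ let $v_s=\lfloor t/b\rfloor\,(b,a)$, and $V_t=\{v_s:s\in S_t\}$. The grid parabola $P_t$ is the infinite convex polygonal chain obtained by concatenating the vectors of $V_t$ in order of increasing slope, positioned so that the edge given by $(t,0)$ goes from $(-t/2,0)$ to $(t/2,0)$. $H_t=\sum_{1\le y\le x\le t,\ \gcd(x,y)=1}\lfloor t/x\rfloor\,x$. *)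

From mathcomp Require Import all_boot all_order all_algebra.
Unset Printing Implicit Defensive.
Import Order.TTheory GRing.Theory Num.Theory.
Local Open Scope ring_scope.

Definition inS (t : nat) (s : rat) : bool := denq s <= t%:Z.

Definition vcoef (t : nat) (s : rat) : nat := (t %/ `|denq s|)%N.
Definition vx (t : nat) (s : rat) : rat := (vcoef t s)%:R * (denq s)%:~R.
Definition vy (t : nat) (s : rat) : rat := (vcoef t s)%:R * (numq s)%:~R.

(* duplicate-free list of all a/b with 1 <= b <= t and -K <= a <= K;
   it contains every element of S_t whose numerator has absolute value <= K *)
Definition Sbox (t K : nat) : seq rat :=
  undup [seq ((k%:Z - K%:Z)%:~R / b%:R : rat) | b <- iota 1 t, k <- iota 0 (2 * K).+1].

(* bound on |numerator| of elements of S_t lying between 0 and s *)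
Definition bnd (t : nat) (s : rat) : nat := (t * `|numq s|)%N.

(* starting point of the edge v_s of the grid parabola P_t:
   the edge v_0 = (t,0) goes from (-t/2,0) to (t/2,0); edges of positive slope
   follow in increasing slope after (t/2,0), edges of negative slope precede
   (-t/2,0) in increasing slope. *)
Definition startx (t : nat) (s : rat) : rat :=
  if 0 < s then t%:R / 2 + \sum_(u <- Sbox t (bnd t s) | (0 < u) && (u < s)) vx t u
  else - (t%:R / 2) - \sum_(u <- Sbox t (bnd t s) | (s <= u) && (u < 0)) vx t u.
Definition starty (t : nat) (s : rat) : rat :=
  if 0 < s then \sum_(u <- Sbox t (bnd t s) | (0 < u) && (u < s)) vy t u
  else - \sum_(u <- Sbox t (bnd t s) | (s <= u) && (u < 0)) vy t u.

Definition gridP (R : realFieldType) (t : nat) (p : R * R) : Prop :=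
  exists s : rat, inS t s /\
    exists2 l : R, (0 <= l <= 1) &
      p = (ratr (startx t s) + l * ratr (vx t s), ratr (starty t s) + l * ratr (vy t s)).

Definition Ht (t : nat) : nat :=
  (\sum_(1 <= x < t.+1) \sum_(1 <= y < x.+1 | coprime x y) (t %/ x) * x)%N.

Definition lattice (R : realFieldType) (t : nat) (p : R * R) : Prop :=
  exists m n : int, p = (t%:R / 2 + m%:~R, n%:~R).

Definition refpar (R : realFieldType) (t : nat) (c : R) (p : R * R) : Prop :=
  p.2 = p.1 ^+ 2 / (2 * (Ht t)%:R) + c.

Definition Tmap (R : realFieldType) (t : nat) (p : R * R) : R * R :=
  (p.1 + (Ht t)%:R, p.2 + p.1 + (Ht t)%:R / 2).

Definition maps_onto {T : Type} (f : T -> T) (A : T -> Prop) : Prop :=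
  (forall p, A p -> A (f p)) /\ (forall q, A q -> exists2 p, A p & f p = q).

(* The edges of P_t are indexed by the slopes s in S_t, and S_t is invariant under
   s |-> s + 1 with v_(s+1) = v_s + (0, x-coordinate of v_s).  The start of edge s + 1 is the
   start of edge s plus the sum of the v_u over the slopes u of S_t in [s, s + 1).  Its
   x-coordinate is a period of a 1-periodic sum, hence equal to the sum over [0, 1), which is
   H_t via (x, y) |-> (x - y)/x; its y-coordinate drifts by the accumulated x-coordinates,
   which yields x_s + H_t/2.  So T maps edge s onto edge s + 1.  The symmetry u |-> 1 - u of
   S_t on (0, 1) makes the y-coordinate of the sum over [0, 1) equal to (H_t - t)/2; being an
   integer, H_t and t have the same parity, which is what T needs to preserve the lattice.
   The parabolas are a direct computation. *)

From mathcomp Require Import all_boot all_order all_algebra.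
From mathcomp Require Import ring lra zify.
Import Order.TTheory GRing.Theory Num.Theory.
Local Open Scope ring_scope.

Lemma numq_denq_addz (u : rat) (k : int) :
  numq (u + k%:~R) = numq u + k * denq u /\ denq (u + k%:~R) = denq u.
Proof.
have d0 : (denq u)%:~R != 0 :> rat by rewrite intr_eq0 denq_neq0.
have -> : u + k%:~R = (numq u + k * denq u)%:~R / (denq u)%:~R.
  by rewrite intrD intrM numqE; field.
have cop : coprime `|numq u + k * denq u| `|denq u|.
  have := coprime_num_den u; rewrite -!coprimezE /coprimez => h.
  by rewrite addrC gcdzC gcdzMDl gcdzC.
rewrite coprimeq_num // coprimeq_den // denq_eq0 /= gtr0_sg ?denq_gt0 // mul1r.
by rewrite gtr0_norm ?denq_gt0.
Qed.

Lemma inS_add1 t u : inS t (u + 1) = inS t u.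
Proof. by rewrite /inS (numq_denq_addz u 1).2. Qed.

Lemma vx_add1 t u : vx t (u + 1) = vx t u.
Proof. by rewrite /vx /vcoef (numq_denq_addz u 1).2. Qed.

Lemma vy_add1 t u : vy t (u + 1) = vy t u + vx t u.
Proof.
rewrite /vy /vx /vcoef (numq_denq_addz u 1).2 (numq_denq_addz u 1).1.
rewrite intrD intrM; ring.
Qed.

Lemma inS_opp t u : inS t (- u) = inS t u.
Proof. by rewrite /inS denqN. Qed.

Lemma vx_opp t u : vx t (- u) = vx t u.
Proof. by rewrite /vx /vcoef denqN. Qed.

Lemma vy_opp t u : vy t (- u) = - vy t u.
Proof. by rewrite /vy /vcoef denqN numqN intrN mulrN. Qed.

Lemma vx0 t : vx t 0 = t%:R.
Proof. by rewrite /vx /vcoef /= divn1 mulr1. Qed.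

Lemma vy0 t : vy t 0 = 0.
Proof. by rewrite /vy mulr0. Qed.

Lemma vy_int t u : vy t u = ((vcoef t u)%:Z * numq u)%:~R.
Proof. by rewrite /vy rmorphM. Qed.

Lemma normz_numq (u : rat) : (`|numq u|)%:~R = `|u| * (denq u)%:~R.
Proof.
rewrite intr_norm numqE normrM.
by rewrite [`|(denq u)%:~R|]ger0_norm // ler0z ltW // denq_gt0.
Qed.

Lemma normq_le_numq (u : rat) : `|u| <= (absz (numq u))%:R.
Proof.
rewrite -[(absz (numq u))%:R]/(((absz (numq u))%:Z)%:~R : rat) abszE normz_numq.
have d1 : 1 <= (denq u)%:~R :> rat.
  by rewrite -[1]/((1:int)%:~R : rat) ler_int; have := denq_gt0 u; lia.
by rewrite ler_peMr.
Qed.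

Lemma numq_le_inS t u (M : nat) :
  inS t u -> `|u| <= M%:R -> `|numq u| <= (t * M)%N%:Z.
Proof.
move=> uS uM; rewrite -(ler_int rat) normz_numq.
have dt : (denq u)%:~R <= t%:R :> rat by rewrite -[t%:R]/((t%:Z)%:~R : rat) ler_int.
have d0 : 0 <= (denq u)%:~R :> rat by rewrite ler0z ltW // denq_gt0.
by rewrite -[((t * M)%N%:Z)%:~R]/(((t * M)%N)%:R : rat) natrM mulrC ler_pM.
Qed.

Lemma mem_Sbox t K u : (u \in Sbox t K) = inS t u && (`|numq u| <= K%:Z).
Proof.
apply/idP/idP.
  rewrite /Sbox mem_undup => /allpairsP [[b k] [hb hk ->]].
  rewrite !mem_iota /= in hb hk.
  set n := (k%:Z - K%:Z).
  have b0 : (b%:Z != 0) by rewrite -lt0n; lia.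
  have hd := den_fracq (n, b%:Z); rewrite /= b0 in hd.
  have db : denq (n%:~R / b%:R) <= b%:Z.
    have -> : (n%:~R / b%:R : rat) = fracq (n, b%:Z) by rewrite fracqE.
    by rewrite hd lez_nat leq_div.
  apply/andP; split; first by rewrite /inS (le_trans db) // lez_nat; lia.
  have bpos : (0 < b%:R :> rat) by rewrite ltr0n; lia.
  rewrite -(ler_int rat) normz_numq.
  apply: (@le_trans _ _ (`|n%:~R / b%:R : rat| * b%:R)).
    by apply: ler_wpM2l => //; rewrite -[b%:R]/((b%:Z)%:~R : rat) ler_int.
  rewrite normrM normfV (gtr0_norm bpos) divfK ?gt_eqF //.
  by rewrite -intr_norm ler_int /n; lia.
case/andP => uS uK; rewrite /Sbox mem_undup; apply/allpairsP.
exists (absz (denq u), absz (numq u + K%:Z)); have := denq_gt0 u.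
rewrite /inS in uS; rewrite !mem_iota /=; split; [lia | lia |].
have -> : (absz (numq u + K%:Z))%:Z - K%:Z = numq u by lia.
have -> : ((absz (denq u))%:R : rat) = (denq u)%:~R.
  by rewrite -[(absz _)%:R]/(((absz (denq u))%:Z)%:~R : rat) gez0_abs // ltW.
by rewrite divq_num_den.
Qed.

Lemma mem_Sbox0 t K : (1 <= t)%N -> 0 \in Sbox t K.
Proof. by move=> t1; rewrite mem_Sbox /inS lez_nat t1. Qed.

Section Reindex.
Variable t : nat.

Lemma big_Sbox_reindex (h h' : rat -> rat) (P Q : pred rat) (f : rat -> rat) K1 K2 :
  cancel h h' -> cancel h' h -> (forall u, inS t (h u) = inS t u) ->
  (forall u, Q (h u) = P u) ->
  (forall u, inS t u -> P u -> `|numq u| <= K2%:Z) ->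
  (forall u, inS t u -> Q u -> `|numq u| <= K1%:Z) ->
  \sum_(u <- Sbox t K1 | Q u) f u = \sum_(u <- Sbox t K2 | P u) f (h u).
Proof.
move=> hK h'K Sh QP PK2 QK1.
rewrite -big_filter -[RHS]big_filter -(big_map h xpredT f).
apply: perm_big; apply: uniq_perm.
- by rewrite filter_uniq // undup_uniq.
- by rewrite map_inj_uniq ?filter_uniq ?undup_uniq //; apply: can_inj hK.
move=> v; rewrite mem_filter mem_Sbox; apply/andP/mapP => [[Qv /andP[vS _]]|].
  have Sh'v : inS t (h' v) by rewrite -Sh h'K.
  have Ph'v : P (h' v) by rewrite -QP h'K.
  by exists (h' v); rewrite ?h'K // mem_filter mem_Sbox Ph'v Sh'v PK2.
case=> u; rewrite mem_filter mem_Sbox => /andP[Pu /andP[uS _]] ->.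
have Shu : inS t (h u) by rewrite Sh.
have Qhu : Q (h u) by rewrite QP.
by rewrite Qhu Shu QK1.
Qed.

Lemma big_Sbox_bound (P : pred rat) (f : rat -> rat) K1 K2 :
  (forall u, inS t u -> P u -> `|numq u| <= K1%:Z) ->
  (forall u, inS t u -> P u -> `|numq u| <= K2%:Z) ->
  \sum_(u <- Sbox t K1 | P u) f u = \sum_(u <- Sbox t K2 | P u) f u.
Proof. by move=> PK1 PK2; exact: (@big_Sbox_reindex id id). Qed.

Lemma big_Sbox_split0 K (f : rat -> rat) c : (1 <= t)%N -> 0 < c ->
  \sum_(u <- Sbox t K | (0 <= u) && (u < c)) f u =
  f 0 + \sum_(u <- Sbox t K | (0 < u) && (u < c)) f u.
Proof.
move=> t1 c0; rewrite -big_filter (bigD1_seq 0) ?filter_uniq ?undup_uniq //; last first.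
  by rewrite mem_filter lexx c0 mem_Sbox0.
rewrite big_filter_cond; congr (_ + _); apply: eq_bigl => u.
by case: (eqVneq u 0) => [->|u0]; rewrite ?ltxx ?andbF ?andbT // [0 < u]lt_def u0.
Qed.

End Reindex.

Definition cover_bound t (a c : rat) : nat := (t * (absz (numq a) + absz (numq c)))%N.

Lemma numq_le_cover_bound t a c u :
  inS t u -> a <= u <= c -> `|numq u| <= (cover_bound t a c)%:Z.
Proof.
move=> uS /andP[au uc]; apply: numq_le_inS => //; rewrite natrD.
have := normq_le_numq a; have := normq_le_numq c.
have := normr_ge0 a; have := normr_ge0 c; have := ler_norm c.
have := normrN a; have := ler_norm (- a).
case: (lerP 0 u) => [/ger0_norm|/ltr0_norm] ->; lra.
Qed.

Lemma numq_le_bnd t s u : inS t u -> `|u| <= `|s| -> `|numq u| <= (bnd t s)%:Z.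
Proof. by move=> uS us; apply: numq_le_inS => //; apply: le_trans (normq_le_numq s). Qed.

(* The sum of [f] over S_t on [a, c): [cover_bound] bounds all numerators there. *)
Definition sumS t (f : rat -> rat) (a c : rat) : rat :=
  \sum_(u <- Sbox t (cover_bound t a c) | (a <= u) && (u < c)) f u.

Definition cumS t (f : rat -> rat) (s : rat) : rat :=
  if 0 <= s then sumS t f 0 s else - sumS t f s 0.

Section WindowSums.
Context {t : nat}.
Implicit Types (f g : rat -> rat) (a b c r s : rat).

Lemma big_Sbox_itv K f a c :
  (forall u, inS t u -> a <= u < c -> `|numq u| <= K%:Z) ->
  \sum_(u <- Sbox t K | (a <= u) && (u < c)) f u = sumS t f a c.
Proof.
move=> aK; apply: big_Sbox_bound => // u uS /andP[au uc].
by apply: numq_le_cover_bound; rewrite // au ltW.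
Qed.

Lemma sumS_id f a : sumS t f a a = 0.
Proof.
rewrite /sumS big1_seq // => u /andP[/andP[au ua] _].
by move: (le_lt_trans au ua); rewrite ltxx.
Qed.

Lemma cumS0 f : cumS t f 0 = 0.
Proof. by rewrite /cumS lexx sumS_id. Qed.

Lemma sumSD f g a c : sumS t (fun u => f u + g u) a c = sumS t f a c + sumS t g a c.
Proof. by rewrite /sumS big_split. Qed.

Lemma eq_sumS {f g a c} : f =1 g -> sumS t f a c = sumS t g a c.
Proof. by move=> fg; apply: eq_bigr => u _. Qed.

Lemma sumS_cat f {a b c} :
  a <= b -> b <= c -> sumS t f a c = sumS t f a b + sumS t f b c.
Proof.
move=> ab bc; have cover u : inS t u -> a <= u <= c -> `|numq u| <= (cover_bound t a c)%:Z.
  exact: numq_le_cover_bound.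
rewrite -(@big_Sbox_itv (cover_bound t a c) f a b); last first.
  by move=> u uS /andP[au ub]; rewrite cover // au ltW // (lt_le_trans ub).
rewrite -(@big_Sbox_itv (cover_bound t a c) f b c); last first.
  by move=> u uS /andP[bu uc]; rewrite cover // (le_trans ab bu) ltW.
rewrite /sumS (bigID (fun u => u < b)) /=; congr (_ + _); apply: eq_bigl => u.
  by case: (ltP u b) => ub; rewrite ?andbT ?andbF // (lt_le_trans ub bc) andbT.
by case: (ltP u b) => bu; rewrite /= ?andbF ?andbT //= (le_trans ab bu).
Qed.

Lemma sumS_shift f a c : sumS t f (a + 1) (c + 1) = sumS t (fun u => f (u + 1)) a c.
Proof.
have addK : cancel (fun u : rat => u + 1) (fun u => u - 1) by move=> u /=; rewrite addrK.
have subK : cancel (fun u : rat => u - 1) (fun u => u + 1) by move=> u /=; rewrite subrK.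
rewrite /sumS; apply: (@big_Sbox_reindex t _ _ (fun u => (a <= u) && (u < c))
  (fun u => (a + 1 <= u) && (u < c + 1)) f _ _ addK subK).
- by move=> u; rewrite inS_add1.
- by move=> u; rewrite lerD2r ltrD2r.
- by move=> u uS /andP[au uc]; apply: numq_le_cover_bound; rewrite // au ltW.
- by move=> u uS /andP[au uc]; apply: numq_le_cover_bound; rewrite // au ltW.
Qed.

Lemma sumS_cumS f a c : a <= c -> sumS t f a c = cumS t f c - cumS t f a.
Proof.
move=> ac; rewrite /cumS; case: (lerP 0 a) => a0.
  rewrite (le_trans a0 ac) (sumS_cat f a0 ac); ring.
case: (lerP 0 c) => c0; first by rewrite (sumS_cat f (ltW a0) c0); ring.
rewrite (sumS_cat f ac (ltW c0)); ring.
Qed.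

End WindowSums.

Section Periodic.
Variable F : rat -> rat.
Hypothesis F_period : forall s, F (s + 1) = F s.

Lemma periodic_addn s (n : nat) : F (s + n%:R) = F s.
Proof. by elim: n => [|n IH]; rewrite ?addr0 // -addn1 natrD addrA F_period. Qed.

Lemma periodic_addz s (n : int) : F (s + n%:~R) = F s.
Proof.
case: n => n; first exact: periodic_addn.
rewrite -[LHS](periodic_addn _ n.+1) NegzE -[(n.+1)%:R]/((n.+1)%:~R : rat).
by rewrite rmorphN subrK.
Qed.

Lemma periodic_const :
  (forall r, 0 <= r -> r < 1 -> F r = F 0) -> forall s, F s = F 0.
Proof.
move=> F01 s; rewrite -(F01 (s - (Num.floor s)%:~R)).
- by rewrite -[in LHS](subrK ((Num.floor s)%:~R) s) periodic_addz.
- by rewrite subr_ge0 floor_le.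
- by have := floorD1_gt s; rewrite rmorphD /= mulr1z; lra.
Qed.

End Periodic.

Section PeriodicSums.
Context {t : nat} {f g : rat -> rat}.
Hypothesis f_period : forall u, f (u + 1) = f u.

Lemma sumS_period s : sumS t f s (s + 1) = sumS t f 0 1.
Proof.
apply: (@periodic_const (fun s => sumS t f s (s + 1))) => {s} [s|r r0 r1] /=.
  by rewrite sumS_shift; apply: eq_sumS.
rewrite add0r (@sumS_cat t f r 1 (r + 1) (ltW r1)); last lra.
by rewrite -{2}(add0r 1) sumS_shift (eq_sumS f_period) addrC -sumS_cat // ltW.
Qed.

Lemma cumS_step s : cumS t f (s + 1) = cumS t f s + sumS t f 0 1.
Proof.
have := @sumS_cumS t f s (s + 1); rewrite sumS_period; lra.
Qed.

Hypothesis g_drift : forall u, g (u + 1) = g u + f u.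

Lemma sumS_drift s : sumS t g s (s + 1) = cumS t f s + sumS t g 0 1.
Proof.
suff : sumS t g s (s + 1) - cumS t f s = sumS t g 0 (0 + 1) - cumS t f 0.
  by rewrite add0r cumS0; lra.
apply: (@periodic_const (fun s => sumS t g s (s + 1) - cumS t f s)) => {s} [s|r r0 r1] /=.
  rewrite cumS_step sumS_shift (eq_sumS g_drift) sumSD sumS_period; ring.
rewrite add0r (@sumS_cat t g r 1 (r + 1) (ltW r1)); last lra.
rewrite -{2}(add0r 1) sumS_shift (eq_sumS g_drift) sumSD.
rewrite /cumS r0 lexx sumS_id (@sumS_cat t g 0 r 1 r0 (ltW r1)); ring.
Qed.

End PeriodicSums.

Definition grid_pairs t : seq (nat * nat) := [seq (x, y) | x <- iota 1 t, y <- iota 1 t].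

(* The pair (x, y) of the sum H_t corresponds to the point (x - y)/x of S_t in [0, 1). *)
Definition Ht_pair (p : nat * nat) : bool := (p.2 <= p.1)%N && coprime p.1 p.2.
Definition pair_frac (p : nat * nat) : rat := (p.1 - p.2)%N%:R / p.1%:R.

Lemma mem_grid_pairs t x y : ((x, y) \in grid_pairs t) = (0 < x <= t)%N && (0 < y <= t)%N.
Proof.
apply/allpairsP/idP => [[[a b] /= [ha hb [-> ->]]]|/andP[xt yt]].
  by move: ha hb; rewrite !mem_iota; lia.
by exists (x, y); rewrite !mem_iota /=; split => //; lia.
Qed.

Lemma Ht_grid_pairs t :
  ((Ht t)%:R : rat) = \sum_(p <- grid_pairs t | Ht_pair p) ((t %/ p.1 * p.1)%N%:R : rat).
Proof.
rewrite /Ht natr_sum [RHS]big_mkcond big_allpairs /index_iota subn1 /=.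
apply: eq_big_seq => x; rewrite mem_iota => /andP[x1 xt].
rewrite natr_sum (big_nat_widen _ _ t.+1) ?ltnS // big_mkcond /index_iota subn1 /=.
apply: eq_big_seq => y _; rewrite /Ht_pair /= ltnS.
by case: (y <= x)%N; rewrite ?andbT ?andbF.
Qed.

Lemma coprime_subn n x : (n <= x)%N -> coprime (x - n) x = coprime n x.
Proof.
by move=> nx; rewrite -{2 3}(subnK nx) /coprime gcdnDl gcdnC addnC gcdnDl.
Qed.

Lemma pair_frac_numq_denq {x y} : (0 < x)%N -> Ht_pair (x, y) ->
  numq (pair_frac (x, y)) = (x - y)%N /\ denq (pair_frac (x, y)) = x.
Proof.
rewrite /Ht_pair /= => x0 /andP[yx cop].
have cop' : coprime `|Posz (x - y)%N| `|Posz x| by rewrite /= coprime_subn // coprime_sym.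
rewrite /pair_frac /= -[((x - y)%N)%:R]/((Posz (x - y)%N)%:~R : rat).
rewrite -[x%:R]/((Posz x)%:~R : rat) coprimeq_num // coprimeq_den //.
by rewrite gtr0_sg ?mul1r ?ltz_nat // eqz_nat gtn_eqF.
Qed.

Lemma vx_pair_frac t x y : (0 < x)%N -> Ht_pair (x, y) ->
  vx t (pair_frac (x, y)) = (t %/ x * x)%N%:R.
Proof. by move=> x0 xy; rewrite /vx /vcoef (pair_frac_numq_denq x0 xy).2 natrM. Qed.

Lemma pair_frac_inj t :
  {in [seq p <- grid_pairs t | Ht_pair p] &, injective pair_frac}.
Proof.
move=> [x y] [x' y']; rewrite !mem_filter !mem_grid_pairs.
move=> /andP[xy /andP[/andP[x0 _] _]] /andP[xy' /andP[/andP[x0' _] _]] E.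
have [n d] := pair_frac_numq_denq x0 xy; have [n' d'] := pair_frac_numq_denq x0' xy'.
move: xy xy'; rewrite /Ht_pair /= => /andP[yx _] /andP[yx' _].
rewrite E n' d' in n d; case: n d => n [d].
by congr (_, _); lia.
Qed.

Lemma Sbox01_pair_frac t :
  perm_eq [seq u <- Sbox t (cover_bound t 0 1) | (0 <= u) && (u < 1)]
          [seq pair_frac p | p <- grid_pairs t & Ht_pair p].
Proof.
apply: uniq_perm; first by rewrite filter_uniq ?undup_uniq.
  rewrite map_inj_in_uniq; last exact: pair_frac_inj.
  by rewrite filter_uniq // allpairs_uniq ?iota_uniq // => -[? ?] [? ?].
move=> u; rewrite mem_filter mem_Sbox; apply/idP/mapP.
  case/and3P => /andP[u0 u1] uS _; move: uS; rewrite /inS => dt.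
  have d0 := denq_gt0 u.
  have /andP[n0 nd] : 0 <= numq u < denq u.
    rewrite numq_ge0 u0 -(ltr_int rat) numqE -[X in _ < X]mul1r ltr_pM2r ?ltr0z //.
  exists (absz (denq u), (absz (denq u) - absz (numq u))%N).
    rewrite mem_filter mem_grid_pairs /Ht_pair /= leq_subr coprime_sym.
    rewrite coprime_subn; last lia.
    by rewrite coprime_num_den /=; lia.
  rewrite /pair_frac /= subKn; last lia.
  by rewrite !natr_absz ger0_norm // gtr0_norm // divq_num_den.
case=> [[x y]]; rewrite mem_filter mem_grid_pairs.
move=> /andP[xy /andP[/andP[x0 xt] /andP[y0 _]]] ->.
have [_ d] := pair_frac_numq_denq x0 xy.
move: xy; rewrite /Ht_pair /= => /andP[yx _].
have xpos : (0 < x%:R :> rat) by rewrite ltr0n.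
have u0 : 0 <= pair_frac (x, y) by rewrite /pair_frac divr_ge0.
have u1 : pair_frac (x, y) < 1 by rewrite /pair_frac ltr_pdivrMr // mul1r ltr_nat /=; lia.
have uS : inS t (pair_frac (x, y)) by rewrite /inS d lez_nat.
apply/and3P; split => //; first exact/andP.
by apply: numq_le_cover_bound => //; apply/andP; split => //; apply: ltW.
Qed.

Lemma sumS_vx01 t : sumS t (vx t) 0 1 = (Ht t)%:R.
Proof.
rewrite Ht_grid_pairs -big_filter (eq_big_seq (fun p => vx t (pair_frac p))); last first.
  move=> [x y]; rewrite mem_filter mem_grid_pairs => /andP[xy /andP[/andP[x0 _] _]].
  by rewrite vx_pair_frac.
rewrite -(big_map pair_frac xpredT) /sumS -[LHS]big_filter.
by apply: perm_big; exact: Sbox01_pair_frac.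
Qed.

Lemma sumS_vy01 {t} : (1 <= t)%N -> 2 * sumS t (vy t) 0 1 = sumS t (vx t) 0 1 - t%:R.
Proof.
move=> t1; set K := cover_bound t 0 1.
have flipK : cancel (fun u : rat => 1 - u) (fun u => 1 - u).
  by move=> u; rewrite opprB addrC subrK.
have refl : \sum_(u <- Sbox t K | (0 < u) && (u < 1)) vy t u =
            \sum_(u <- Sbox t K | (0 < u) && (u < 1)) (vx t u - vy t u).
  have bound u : inS t u -> (0 < u) && (u < 1) -> `|numq u| <= K%:Z.
    by move=> uS /andP[u0 u1]; apply: numq_le_cover_bound; rewrite // ltW // ltW.
  rewrite (@big_Sbox_reindex t _ _ (fun u => (0 < u) && (u < 1)) _ _ K K flipK flipK) //.
  - by apply: eq_bigr => u _; rewrite addrC vy_add1 vy_opp vx_opp addrC.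
  - by move=> u; rewrite addrC inS_add1 inS_opp.
  - by move=> u; rewrite subr_gt0 ltrBlDr ltrDl andbC.
move: refl; rewrite /sumS -/K !big_Sbox_split0 // vy0 vx0 sumrB; lra.
Qed.

Lemma sumS_vy_int t a c : exists z : int, sumS t (vy t) a c = z%:~R.
Proof.
exists (\sum_(u <- Sbox t (cover_bound t a c) | (a <= u) && (u < c))
          ((vcoef t u)%:Z * numq u)).
by rewrite rmorph_sum; apply: eq_bigr => u _; rewrite vy_int.
Qed.

Lemma Ht_parity {t} : (1 <= t)%N -> exists z : int, (Ht t)%:Z = t%:Z + 2 * z.
Proof.
move=> t1; have [z vyz] := sumS_vy_int t 0 1; exists z; apply: (@intr_inj rat).
have := sumS_vy01 t1; rewrite vyz sumS_vx01 !rmorphD rmorphM /=; lra.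
Qed.

Lemma leq_Ht t : (t <= Ht t)%N.
Proof.
case: t => // t; rewrite /Ht big_ltn // big_mkcond big_nat1 coprime1n divn1 muln1.
exact: leq_addr.
Qed.

Lemma big_Sbox_bnd_pos t f s : (1 <= t)%N -> 0 < s ->
  \sum_(u <- Sbox t (bnd t s) | (0 < u) && (u < s)) f u = sumS t f 0 s - f 0.
Proof.
move=> t1 s0; rewrite -(@big_Sbox_itv t (bnd t s)); last first.
  move=> u uS /andP[u0 us]; apply: numq_le_bnd => //.
  by rewrite (ger0_norm u0) (ger0_norm (ltW s0)) ltW.
by rewrite (@big_Sbox_split0 t _ f s t1 s0) addrAC subrr add0r.
Qed.

Lemma big_Sbox_bnd_neg t f s : s <= 0 ->
  \sum_(u <- Sbox t (bnd t s) | (s <= u) && (u < 0)) f u = sumS t f s 0.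
Proof.
move=> s0; apply: big_Sbox_itv => u uS /andP[su u0]; apply: numq_le_bnd => //.
by rewrite !ler0_norm ?lerN2 // ltW.
Qed.

Lemma cumS_nonpos t f s : s <= 0 -> cumS t f s = - sumS t f s 0.
Proof.
rewrite /cumS le_eqVlt => /orP[/eqP->|s0]; first by rewrite lexx !sumS_id oppr0.
by rewrite leNgt s0.
Qed.

Lemma startx_cumS t s : (1 <= t)%N -> startx t s = - (t%:R / 2) + cumS t (vx t) s.
Proof.
move=> t1; rewrite /startx; case: ltrP => s0.
  by rewrite big_Sbox_bnd_pos // /cumS (ltW s0) vx0; lra.
by rewrite big_Sbox_bnd_neg // cumS_nonpos.
Qed.

Lemma starty_cumS t s : (1 <= t)%N -> starty t s = cumS t (vy t) s.
Proof.
move=> t1; rewrite /starty; case: ltrP => s0.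
  by rewrite big_Sbox_bnd_pos // /cumS (ltW s0) vy0 subr0.
by rewrite big_Sbox_bnd_neg // cumS_nonpos.
Qed.

Lemma startx_add1 t s : (1 <= t)%N -> startx t (s + 1) = startx t s + (Ht t)%:R.
Proof.
by move=> t1; rewrite !startx_cumS // (cumS_step (vx_add1 t)) sumS_vx01 addrA.
Qed.

Lemma starty_add1 t s : (1 <= t)%N ->
  starty t (s + 1) = starty t s + startx t s + (Ht t)%:R / 2.
Proof.
move=> t1; have := @sumS_cumS t (vy t) s (s + 1).
rewrite (sumS_drift (vx_add1 t) (vy_add1 t)) ?lerDl // -!starty_cumS //.
have := sumS_vy01 t1; rewrite sumS_vx01 startx_cumS //; lra.
Qed.

Definition edge_point (R : realFieldType) t (s : rat) (l : R) : R * R :=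
  (ratr (startx t s) + l * ratr (vx t s), ratr (starty t s) + l * ratr (vy t s)).

Lemma Tmap_edge_point (R : realFieldType) t s l : (1 <= t)%N ->
  Tmap R t (edge_point R t s l) = edge_point R t (s + 1) l.
Proof.
move=> t1; rewrite /Tmap /edge_point /= vx_add1 vy_add1 startx_add1 // starty_add1 //.
rewrite !rmorphD /= [ratr (_ / 2)]rmorphM /= fmorphV /= !ratr_nat.
congr (_, _); ring.
Qed.

Lemma Tmap_lattice (R : realFieldType) t :
  (1 <= t)%N -> maps_onto (Tmap R t) (lattice R t).
Proof.
move=> t1; have [z Hz] := Ht_parity t1.
have HzR : ((Ht t)%:R : R) = t%:R + 2 * z%:~R.
  by rewrite -[(Ht t)%:R]/((Ht t)%:~R : R) Hz rmorphD rmorphM.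
split=> [_ [m [n ->]]|_ [m [n ->]]].
  exists (m + t%:Z + 2 * z), (n + m + t%:Z + z).
  by rewrite /Tmap /= HzR !rmorphD rmorphM /=; congr (_, _); lra.
exists (t%:R / 2 + (m - t%:Z - 2 * z)%:~R, (n - m + z)%:~R).
  by exists (m - t%:Z - 2 * z), (n - m + z).
by rewrite /Tmap /= HzR !(rmorphD, rmorphB, rmorphM) /=; congr (_, _); lra.
Qed.

Lemma Tmap_gridP (R : realFieldType) t :
  (1 <= t)%N -> maps_onto (Tmap R t) (gridP R t).
Proof.
move=> t1; split=> [_ [s [sS [l l01 ->]]]|_ [s [sS [l l01 ->]]]].
  rewrite -[(ratr _ + _, _)]/(edge_point R t s l) Tmap_edge_point //.
  by exists (s + 1); rewrite inS_add1; split => //; exists l.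
exists (edge_point R t (s - 1) l); last by rewrite Tmap_edge_point // subrK.
by exists (s - 1); rewrite -inS_add1 subrK; split => //; exists l.
Qed.

Lemma Tmap_refpar (R : realFieldType) t c :
  (0 < Ht t)%N -> maps_onto (Tmap R t) (refpar R t c).
Proof.
move=> H0; have H0R : ((Ht t)%:R : R) != 0 by rewrite pnatr_eq0 -lt0n.
rewrite /refpar /Tmap; split=> [p /= ->|q q_on]; first by field.
exists (q.1 - (Ht t)%:R, q.2 - (q.1 - (Ht t)%:R) - (Ht t)%:R / 2) => /=.
  by rewrite q_on; field.
by case: q q_on => a b /= _; congr (_, _); ring.
Qed.

Theorem lemma1 (R : realFieldType) (t : nat) (ht : (1 <= t)%N) :
  maps_onto (Tmap R t) (lattice R t) /\
  maps_onto (Tmap R t) (gridP R t) /\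
  (forall c : R, maps_onto (Tmap R t) (refpar R t c)).
Proof.
split; [exact: Tmap_lattice | split; first exact: Tmap_gridP].
by move=> c; apply: Tmap_refpar; apply: leq_trans (leq_Ht t).
Qed.
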